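(* Let $P=\operatorname{conv}(W(\Lambda))$ be a full-dimensional $W$-symmetric polytope, $K\subseteq S$, and let $F$ be a facet of $P$ whose barycenter lies in $C_K$. (1) The stabilizer $W_F$ of $F$ in $W_K$ is generated by the simple reflections $r_k$, $k\in K$, that fix the barycenter of $F$. (2) If $P$ is non-degenerate, then for every $s\in W_K$ the intersection $s(F)\cap F$ is either $F$ or empty.
   Context: $V$ is a real Euclidean space of dimension $n$, $R$ a reduced root system spanning $V$ with simple system $S=\{\alpha_1,\dots,\alpha_n\}$ identified with $\{1,\dots,n\}$; $r_i(x)=x-\frac{2\langle x,\alpha_i\rangle}{\langle\alpha_i,\alpha_i\rangle}\alpha_i$; $W$ generated by all $r_i$, $W_K$ by $r_k$, $k\in K$. $C_K=\{x:\langle x,\alpha_k\rangle\ge0\ \forall k\in K\}$; $\Lambda\subset C_S$ finite. $P$ is non-degenerate if no vertex of $P$ lies on the boundary of $C_S$. *)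

From mathcomp Require Import all_boot all_order all_algebra.
From mathcomp Require Import reals.
Set Implicit Arguments. Unset Strict Implicit. Unset Printing Implicit Defensive.
Import Order.TTheory GRing.Theory Num.Theory.
Local Open Scope ring_scope.

Section Defs.
Variables (R : realType) (n : nat).
Notation vec := 'rV[R]_n.

Definition dot (u v : vec) : R := (u *m v^T) 0 0.

Definition refl (a x : vec) : vec := x - (2 * dot x a / dot a a) *: a.

Definition root_system (Rt : seq vec) : Prop :=
  [/\ 0 \notin Rt,
      row_full (\matrix_(i < size Rt) nth 0 Rt i),
      (forall a x, a \in Rt -> x \in Rt -> refl a x \in Rt),
      (forall a x, a \in Rt -> x \in Rt ->
          exists z : int, 2 * dot x a / dot a a = z%:~R) &
      (forall a (c : R), a \in Rt -> c *: a \in Rt -> c = 1 \/ c = -1)].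

Definition simple_system (Rt : seq vec) (alpha : 'I_n -> vec) : Prop :=
  [/\ forall i, alpha i \in Rt,
      row_free (\matrix_(i < n) alpha i) &
      forall x, x \in Rt -> exists c : 'I_n -> R,
        x = \sum_(i < n) c i *: alpha i /\
        ((forall i, 0 <= c i) \/ (forall i, c i <= 0))].

Definition wact (alpha : 'I_n -> vec) (s : seq 'I_n) (x : vec) : vec :=
  foldr (fun i y => refl (alpha i) y) x s.

Definition inWK (alpha : 'I_n -> vec) (K : {set 'I_n}) (w : vec -> vec) : Prop :=
  exists s : seq 'I_n, all (fun i => i \in K) s /\ forall x, w x = wact alpha s x.

Definition inC (alpha : 'I_n -> vec) (K : {set 'I_n}) (x : vec) : Prop :=
  forall k, k \in K -> 0 <= dot x (alpha k).

Definition conv (A : vec -> Prop) (x : vec) : Prop :=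
  exists (m : nat) (c : 'I_m -> R) (p : 'I_m -> vec),
    [/\ forall i, 0 <= c i, \sum_(i < m) c i = 1, forall i, A (p i) &
        x = \sum_(i < m) c i *: p i].

Definition Worbit (alpha : 'I_n -> vec) (Lam : seq vec) (y : vec) : Prop :=
  exists (s : seq 'I_n) (l : vec), l \in Lam /\ y = wact alpha s l.

Definition Wpolytope (alpha : 'I_n -> vec) (Lam : seq vec) : vec -> Prop :=
  conv (Worbit alpha Lam).

Definition full_dim (P : vec -> Prop) : Prop :=
  forall (a : vec) (d : R), (forall x, P x -> dot a x = d) -> a = 0.

(* F is a facet of P: a nonempty face cut out by a supporting hyperplane
   {<a,x> = b}, whose affine hull is that hyperplane (dim F = n - 1) *)
Definition facet (P F : vec -> Prop) : Prop :=
  exists (a : vec) (b : R),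
    [/\ a != 0,
        forall x, P x -> dot a x <= b,
        forall x, F x <-> (P x /\ dot a x = b),
        exists x, F x &
        forall (c : vec) (d : R), (forall x, F x -> dot c x = d) ->
          exists t : R, c = t *: a /\ d = t * b].

Definition vertex (P : vec -> Prop) (v : vec) : Prop :=
  P v /\ forall x y (t : R), P x -> P y -> 0 < t -> t < 1 ->
    v = t *: x + (1 - t) *: y -> x = v /\ y = v.

Definition is_bary (F : vec -> Prop) (b : vec) : Prop :=
  exists s : seq vec, [/\ uniq s, forall v, v \in s <-> vertex F v &
    b = (size s)%:R^-1 *: \sum_(v <- s) v].

Definition img (w : vec -> vec) (F : vec -> Prop) (y : vec) : Prop :=
  exists x, F x /\ w x = y.

Definition stabilizes (w : vec -> vec) (F : vec -> Prop) : Prop :=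
  forall y, img w F y <-> F y.

Definition on_boundary (alpha : 'I_n -> vec) (x : vec) : Prop :=
  inC alpha setT x /\ exists i, dot x (alpha i) = 0.

Definition Wnondegenerate (alpha : 'I_n -> vec) (P : vec -> Prop) : Prop :=
  forall v, vertex P v -> ~ on_boundary alpha v.

End Defs.

From HB Require Import structures.
From mathcomp Require Import all_boot all_order all_algebra.
From mathcomp Require Import reals boolp.
From mathcomp Require Import ring lra.
Set Implicit Arguments. Unset Strict Implicit. Unset Printing Implicit Defensive.
Import Order.TTheory GRing.Theory Num.Theory.
Local Open Scope ring_scope.

(* Write the facet F as {x in P | <a, x> = be}.  Since W acts on P by isometries,
   s(F) is the facet with outer normal s(a), so s(F) = F iff s(a) = a.

   (1) If s in W_K stabilizes F, it permutes the vertices of F and so fixes their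
   barycenter b.  Conversely, if s fixes b then <s(a), .> <= be on P with equality
   at b; as b is an average of the vertices of F, equality holds on all of F, so
   s(a) = +-a, and -a is excluded because P is full-dimensional.  Finally, the
   stabilizer in W_K of a point b of C_K is generated by the r_k (k in K) fixing b,
   by induction on word length using the deletion condition.

   (2) If x lies in F and in s(F), then <a + s(a), .> attains its maximum 2 be at
   x, hence at a vertex v of P with <a, v> = <s(a), v> = be.  Some t in W_K moves v
   to a K-dominant vertex z = t(v), which non-degeneracy makes strictly
   K-dominant.  The normal a is K-dominant because b is, and then
   <a, z - u(z)> >= 0 for every u in W_K, with equality only if u(a) = a.  As
   <a, z> <= be, the cases u = t^-1 and u = s^-1 t^-1 give t^-1(a) = a and then
   s^-1(a) = a. *)

Section InnerProduct.
Variables (R : realType) (n : nat).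
Notation vec := 'rV[R]_n.
Implicit Types u v w : vec.

Lemma dotE u v : dot u v = \sum_j u 0 j * v 0 j.
Proof. by rewrite /dot mxE; apply: eq_bigr => j _; rewrite mxE. Qed.

Lemma dotC u v : dot u v = dot v u.
Proof. by rewrite !dotE; apply: eq_bigr => j _; rewrite mulrC. Qed.

Lemma dotDl u v w : dot (u + v) w = dot u w + dot v w.
Proof. by rewrite /dot mulmxDl mxE. Qed.

Lemma dotZl c u w : dot (c *: u) w = c * dot u w.
Proof. by rewrite /dot -scalemxAl mxE. Qed.

Lemma dotNl u w : dot (- u) w = - dot u w.
Proof. by rewrite -scaleN1r dotZl mulN1r. Qed.

Lemma dotBl u v w : dot (u - v) w = dot u w - dot v w.
Proof. by rewrite dotDl dotNl. Qed.

Lemma dotDr u v w : dot w (u + v) = dot w u + dot w v.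
Proof. by rewrite dotC dotDl !(dotC w). Qed.

Lemma dotZr c u w : dot w (c *: u) = c * dot w u.
Proof. by rewrite dotC dotZl dotC. Qed.

Lemma dotNr u w : dot w (- u) = - dot w u.
Proof. by rewrite dotC dotNl dotC. Qed.

Lemma dotBr u v w : dot w (u - v) = dot w u - dot w v.
Proof. by rewrite dotDr dotNr. Qed.

Lemma dot0r w : dot w 0 = 0.
Proof. by rewrite -(scale0r 0) dotZr mul0r. Qed.

Lemma dot_sumr I (r : seq I) (P : pred I) (F : I -> vec) w :
  dot w (\sum_(i <- r | P i) F i) = \sum_(i <- r | P i) dot w (F i).
Proof. by elim/big_rec2: _ => [|i y1 y2 _ <-]; rewrite ?dot0r ?dotDr. Qed.

Lemma dot_gt0 u : u != 0 -> 0 < dot u u.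
Proof.
move=> u0; rewrite dotE lt_def psumr_eq0 => [|j _]; last by rewrite -expr2 sqr_ge0.
rewrite sumr_ge0 => [|j _]; last by rewrite -expr2 sqr_ge0.
rewrite andbT; apply: contra u0 => /allP u_eq0; apply/eqP/rowP => j.
by move: (u_eq0 j (mem_index_enum j)); rewrite /= mulf_eq0 orbb mxE => /eqP.
Qed.

End InnerProduct.

Section Reflections.
Variables (R : realType) (n : nat).
Notation vec := 'rV[R]_n.
Implicit Types a x y : vec.

Fact refl_is_linear a : linear (refl a).
Proof.
move=> c x y; rewrite /refl dotDl dotZl scalerBr scalerA addrACA -opprD -scalerDl.
by congr (_ - _ *: _); ring.
Qed.

HB.instance Definition _ a :=
  GRing.isLinear.Build R vec vec _ (refl a) (refl_is_linear a).

Section NonzeroNormal.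
Variable a : vec.
Hypothesis a_neq0 : a != 0.

Let daa_neq0 : dot a a != 0. Proof. by rewrite gt_eqF ?dot_gt0. Qed.

Lemma refl_self : refl a a = - a.
Proof. by rewrite /refl mulfK // scaler_nat mulr2n opprD addNKr. Qed.

Lemma reflK : involutive (refl a).
Proof.
move=> x; rewrite /refl dotBl dotZl -addrA -opprD -scalerDl.
set c := 2 * dot x a / dot a a.
have -> : c + 2 * (dot x a - c * dot a a) / dot a a = 0 by rewrite /c; field.
by rewrite scale0r subr0.
Qed.

Lemma refl_fix x : (refl a x == x) = (dot x a == 0).
Proof.
rewrite /refl subr_eq addrC -subr_eq subrr eq_sym scaler_eq0 (negbTE a_neq0) orbF.
by rewrite !mulf_eq0 invr_eq0 (negbTE daa_neq0) pnatr_eq0 orbF.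
Qed.

Lemma dot_refl x y : dot (refl a x) (refl a y) = dot x y.
Proof. by rewrite /refl !(dotBl, dotBr, dotZl, dotZr) (dotC a y); field. Qed.

End NonzeroNormal.

Variable alpha : 'I_n -> vec.
Notation wa := (wact alpha).

Fact wact_is_linear s : linear (wa s).
Proof. by elim: s => [|i s IH] c x y //=; rewrite IH linearP. Qed.

HB.instance Definition _ s :=
  GRing.isLinear.Build R vec vec _ (wa s) (wact_is_linear s).

Lemma wact_cat s1 s2 x : wa (s1 ++ s2) x = wa s1 (wa s2 x).
Proof. by rewrite /wact foldr_cat. Qed.

Lemma wact_rcons s i x : wa (rcons s i) x = wa s (refl (alpha i) x).
Proof. by rewrite -cats1 wact_cat. Qed.

End Reflections.

Section Combinations.
Variables (R : realType) (n : nat).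
Notation vec := 'rV[R]_n.
Implicit Types (A B : vec -> Prop) (x y p : vec) (T : seq vec).

(* [wcomb A mu x]: x is a nonnegative combination of points of A with total
   weight mu; points of weight zero need not lie in A. *)
Inductive wcomb A : R -> vec -> Prop :=
  | wcomb0 : wcomb A 0 0
  | wcombS c p mu x : 0 <= c -> (c != 0 -> A p) -> wcomb A mu x ->
      wcomb A (c + mu) (c *: p + x).

Lemma wcomb1 A c p : 0 <= c -> A p -> wcomb A c (c *: p).
Proof. by move=> c0 Ap; have := wcombS c0 (fun=> Ap) (wcomb0 A); rewrite !addr0. Qed.

Lemma wcomb_ge0 A mu x : wcomb A mu x -> 0 <= mu.
Proof. by elim=> // c p {}mu {}x c0 _ _; apply: addr_ge0. Qed.

Lemma wcomb_weight0 A x : wcomb A 0 x -> x = 0.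
Proof.
suff: forall mu x, wcomb A mu x -> mu = 0 -> x = 0 by move=> /[apply]; apply.
move=> mu {}x; elim=> // c p {}mu {}x c0 _ wx IH /eqP.
rewrite paddr_eq0 ?(wcomb_ge0 wx) // => /andP [/eqP -> /eqP /IH ->].
by rewrite scale0r addr0.
Qed.

Lemma wcomb_exists A mu x : wcomb A mu x -> 0 < mu -> exists y, A y.
Proof.
elim=> [|c p {}mu {}x _ Ap _ IH]; first by rewrite ltxx.
by have [-> /[!add0r] //|/Ap] := eqVneq c 0; exists p.
Qed.

Lemma wcombD A m1 m2 x1 x2 :
  wcomb A m1 x1 -> wcomb A m2 x2 -> wcomb A (m1 + m2) (x1 + x2).
Proof.
move=> + w2; elim=> [|c p mu x c0 Ap _ IH]; first by rewrite !add0r.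
by rewrite -!addrA; apply: wcombS.
Qed.

Lemma wcombZ A t mu x : 0 <= t -> wcomb A mu x -> wcomb A (t * mu) (t *: x).
Proof.
move=> t0; elim=> [|c p {}mu {}x c0 Ap _ IH].
  by rewrite mulr0 scaler0; apply: wcomb0.
rewrite mulrDr scalerDr scalerA; apply: wcombS IH; first exact: mulr_ge0.
by move=> tc; apply: Ap; apply: contraNneq tc => ->; rewrite mulr0.
Qed.

Lemma wcomb_sub A B mu x : (forall y, A y -> B y) -> wcomb A mu x -> wcomb B mu x.
Proof.
move=> AB; elim=> [|c p {}mu {}x c0 Ap _ IH]; first exact: wcomb0.
by apply: wcombS => // /Ap /AB.
Qed.

Lemma wcomb_flatten A B mu x :
  (forall y, A y -> wcomb B 1 y) -> wcomb A mu x -> wcomb B mu x.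
Proof.
move=> AB; elim=> [|c p {}mu {}x c0 Ap _ IH]; first exact: wcomb0.
apply: wcombD IH; have [->|/Ap/AB Bp] := eqVneq c 0.
  by rewrite scale0r; apply: wcomb0.
by have := wcombZ c0 Bp; rewrite mulr1.
Qed.

Lemma wcomb_linear A B (f : {linear vec -> vec}) mu x :
  (forall y, A y -> B (f y)) -> wcomb A mu x -> wcomb B mu (f x).
Proof.
move=> AB; elim=> [|c p {}mu {}x c0 Ap _ IH]; first by rewrite linear0; apply: wcomb0.
by rewrite linearD linearZ; apply: wcombS => // /Ap /AB.
Qed.

Lemma wcomb_dot_le A g be mu x : (forall y, A y -> dot g y <= be) ->
  wcomb A mu x -> dot g x <= mu * be.
Proof.
move=> gA; elim=> [|c p {}mu {}x c0 Ap _ IH]; first by rewrite dot0r mul0r.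
rewrite dotDr dotZr mulrDl lerD //.
by have [->|/Ap/gA gp] := eqVneq c 0; rewrite ?mul0r // ler_wpM2l.
Qed.

Lemma wcomb_dot_const A g be mu x : (forall y, A y -> dot g y = be) ->
  wcomb A mu x -> dot g x = mu * be.
Proof.
move=> gA; elim=> [|c p {}mu {}x c0 Ap _ IH]; first by rewrite dot0r mul0r.
rewrite dotDr dotZr mulrDl IH.
by have [->|/Ap/gA ->] := eqVneq c 0; rewrite ?mul0r.
Qed.

Lemma wcomb_dot_eq A g be mu x : (forall y, A y -> dot g y <= be) ->
  wcomb A mu x -> dot g x = mu * be -> wcomb (fun y => A y /\ dot g y = be) mu x.
Proof.
move=> gA; elim=> [|c p {}mu {}x c0 Ap wx IH]; first by move=> _; apply: wcomb0.
rewrite dotDr dotZr mulrDl => e.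
have le_p : c * dot g p <= c * be.
  by have [->|/Ap/gA gp] := eqVneq c 0; rewrite ?mul0r // ler_wpM2l.
have le_x := wcomb_dot_le gA wx.
have ep : c * dot g p = c * be by apply/le_anti; rewrite le_p /=; lra.
apply: wcombS => [//|cn|]; last by apply: IH; lra.
by split; [exact: Ap | exact: mulfI ep].
Qed.

Lemma wcomb_split A p mu x : wcomb A mu x -> exists la r,
  [/\ 0 <= la, wcomb (fun y => A y /\ y <> p) (mu - la) r & x = la *: p + r].
Proof.
elim=> [|c q {}mu {}x c0 Aq _ [la [r [la0 wr ->]]]].
  by exists 0, 0; rewrite subr0 scale0r addr0; split => //; apply: wcomb0.
have [-> | qp] := eqVneq q p.
  exists (c + la), r; split; first exact: addr_ge0.
    by rewrite opprD addrACA subrr add0r.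
  by rewrite scalerDl addrA.
exists la, (c *: q + r); split => //; last by rewrite addrCA.
by rewrite -addrA; apply: wcombS => // /Aq; split => //; apply/eqP.
Qed.

Lemma conv_wcomb A x : conv A x <-> wcomb A 1 x.
Proof.
split=> [[m [c [p [c_ge0 c1 Ap ->]]]] | wx].
  rewrite -c1; elim: (index_enum _) => [|i r IH]; rewrite ?big_nil ?big_cons.
    by constructor.
  by constructor => // _; apply: Ap.
have [y0 Ay0] := wcomb_exists wx ltr01.
suff : forall mu x, wcomb A mu x -> exists m (d : 'I_m -> R) q,
  [/\ forall i, 0 <= d i, \sum_(i < m) d i = mu, forall i, A (q i) &
      x = \sum_(i < m) d i *: q i] by apply.
move=> {wx} mu {}x; elim=> [|c p {}mu {}x c0 Ap _ [m [d [q [d_ge0 dmu Aq ->]]]]].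
  by exists 0%N, (fun=> 0), (fun=> y0); rewrite !big_ord0.
exists m.+1, (fun i => if unlift ord0 i is Some j then d j else c),
  (fun i => if unlift ord0 i is Some j then q j else if c != 0 then p else y0).
split=> [i||i|]; rewrite ?big_ord_recl ?unlift_none.
- by case: unliftP => [j _|_]; [apply: d_ge0 | apply: c0].
- by under eq_bigr do rewrite liftK; rewrite dmu.
- by case: unliftP => [j _|_]; [apply: Aq | case: ifP => // /Ap].
- case: (c =P 0) => [->|/eqP cn]; rewrite ?scale0r ?cn; congr (_ + _).
  all: by apply: eq_bigr => j _; rewrite liftK.
Qed.

Lemma wcomb_seq (s : seq vec) : wcomb (fun y => y \in s) (size s)%:R (\sum_(v <- s) v).
Proof.
elim: s => [|v s IH]; first by rewrite big_nil; apply: wcomb0.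
rewrite big_cons /= mulrS -{2}[v]scale1r.
constructor => [|_|]; [exact: ler01 | exact: mem_head |].
by apply: wcomb_sub IH => y ys; rewrite inE ys orbT.
Qed.

Definition hull T : vec -> Prop := wcomb (fun y => y \in T) 1.

Lemma hull_mem T p : p \in T -> hull T p.
Proof.
by move=> pT; have := wcomb1 (A := fun y => y \in T) ler01 pT; rewrite scale1r.
Qed.

Lemma hull_convex T mu x : wcomb (hull T) mu x -> 0 < mu -> hull T (mu^-1 *: x).
Proof.
move=> wx mu_gt0; have mu_inv : 0 <= mu^-1 by rewrite invr_ge0 ltW.
by have := wcombZ mu_inv (wcomb_flatten (fun y h => h) wx); rewrite mulVf ?gt_eqF.
Qed.

Lemma conv_hull A T : (forall y, A y <-> y \in T) -> conv A = hull T.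
Proof.
move=> AT; apply/funext => x; apply/propext; rewrite conv_wcomb.
by split; apply: wcomb_sub => y /AT.
Qed.

Lemma vertex_sub (Q Q' : vec -> Prop) v :
  (forall x, Q' x -> Q x) -> Q' v -> vertex Q v -> vertex Q' v.
Proof. by move=> Q'Q Q'v [_ vQ]; split=> // x y t /Q'Q Qx /Q'Q Qy; apply: vQ. Qed.

Lemma hull_decomp T p x : hull T x -> exists la r,
  [/\ 0 <= la <= 1, wcomb (fun y => y \in filter (predC1 p) T) (1 - la) r &
      x = la *: p + r].
Proof.
move=> /(wcomb_split p) [la [r [la0 wr ->]]]; exists la, r; split => //.
  by rewrite la0 -subr_ge0 (wcomb_ge0 wr).
by apply: wcomb_sub wr => y [yT /eqP yp]; rewrite mem_filter /= yp.
Qed.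

Lemma vertex_hull T p : p \in T -> ~ hull (filter (predC1 p) T) p -> vertex (hull T) p.
Proof.
move=> pT p_out; split=> [|x y t hx hy t0 t1 ep]; first exact: hull_mem.
have [lx [rx [/andP [lx0 lx1] wrx ex]]] := hull_decomp p hx.
have [ly [ry [/andP [ly0 ly1] wry ey]]] := hull_decomp p hy.
set la := t * lx + (1 - t) * ly.
have wr : wcomb (fun y => y \in filter (predC1 p) T) (1 - la) (t *: rx + (1 - t) *: ry).
  have t1' : 0 <= 1 - t by rewrite subr_ge0 ltW.
  have := wcombD (wcombZ (ltW t0) wrx) (wcombZ t1' wry).
  by congr wcomb; rewrite /la; ring.
have ep' : p = la *: p + (t *: rx + (1 - t) *: ry).
  by rewrite {1}ep ex ey !scalerDr !scalerA addrACA -scalerDl.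
have er : t *: rx + (1 - t) *: ry = (1 - la) *: p.
  by rewrite [in RHS]scalerBl scale1r {1}ep' addrAC subrr add0r.
have [la_lt1|la_ge1] := ltP la 1.
  have la_inv : 0 <= (1 - la)^-1 by rewrite invr_ge0 subr_ge0 ltW.
  case: p_out; have := wcombZ la_inv wr.
  have la1 : 1 - la != 0 by rewrite gt_eqF ?subr_gt0.
  by rewrite mulVf // er scalerA mulVf // scale1r.
have [lx_eq1 ly_eq1] : lx = 1 /\ ly = 1.
  have h1 : 0 <= t * (1 - lx) by rewrite mulr_ge0 ?subr_ge0 // ltW.
  have h2 : 0 <= (1 - t) * (1 - ly) by rewrite mulr_ge0 ?subr_ge0 // ltW.
  have : t * (1 - lx) + (1 - t) * (1 - ly) == 0.
    by rewrite eq_le addr_ge0 // andbT; move: la_ge1; rewrite /la; lra.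
  rewrite paddr_eq0 // !mulf_eq0 !subr_eq0 (gt_eqF t0) (gt_eqF t1) /=.
  by move=> /andP [/eqP <- /eqP <-].
move: wrx wry; rewrite lx_eq1 ly_eq1 subrr => /wcomb_weight0 rx0 /wcomb_weight0 ry0.
by rewrite ex ey rx0 ry0 lx_eq1 ly_eq1 scale1r addr0.
Qed.

Lemma hull_drop T p :
  hull (filter (predC1 p) T) p -> hull (filter (predC1 p) T) = hull T.
Proof.
move=> pT'; apply/funext => x; apply/propext; split; apply: wcomb_flatten => y.
  by rewrite mem_filter => /andP [_ /hull_mem].
by have [->|yp yT] := eqVneq y p; last by apply: hull_mem; rewrite mem_filter /= yp.
Qed.

Lemma krein_milman T x : hull T x -> wcomb (fun y => y \in T /\ vertex (hull T) y) 1 x.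
Proof.
have [m] := ubnP (size T); elim: m T x => // m IH T x ltTm hx.
have [[p pT pT']|no_drop] :=
  pselect (exists2 p, p \in T & hull (filter (predC1 p) T) p); last first.
  apply: wcomb_sub hx => y yT; split => //; apply: vertex_hull => // hy.
  by apply: no_drop; exists y.
have ltT'm : (size (filter (predC1 p) T) < m)%N.
  rewrite -ltnS (leq_trans _ ltTm) // ltnS size_filter -(count_predC (pred1 p)).
  by rewrite -add1n leq_add2r -has_count has_pred1.
have := IH _ x ltT'm; rewrite hull_drop // => /(_ hx); apply: wcomb_sub => y [].
by rewrite mem_filter => /andP [_ yT] vy; split.
Qed.

Lemma face_vertices T F g be x : (forall y, hull T y -> dot g y <= be) ->
  (forall y, F y <-> hull T y /\ dot g y = be) -> F x -> wcomb (vertex F) 1 x.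
Proof.
move=> g_le eF /eF [hx gx].
have gv : forall y, y \in T /\ vertex (hull T) y -> dot g y <= be.
  by move=> y [_ [/g_le]].
have := wcomb_dot_eq gv (krein_milman hx); rewrite mul1r => /(_ gx).
apply: wcomb_sub => y [[_ vy] gy].
have Fy : F y by apply/eF; split => //; case: vy.
by apply: vertex_sub Fy vy => z /eF [].
Qed.

End Combinations.

Lemma exists_seq_max (disp : Order.disp_t) (O : orderType disp) (X : eqType)
    (f : X -> O) (s : seq X) y0 :
  y0 \in s -> exists2 z, z \in s & forall y, y \in s -> (f y <= f z)%O.
Proof.
elim: s y0 => // u [|u' s] IH y0 _.
  by exists u => [|y]; rewrite ?mem_seq1 // => /eqP ->.
have [z zs zmax] := IH u' (mem_head _ _).
have [zu|uz] := leP (f z) (f u).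
  exists u => [|y]; first exact: mem_head.
  by rewrite inE => /predU1P [->//|/zmax /le_trans]; apply.
exists z => [|y]; first by rewrite inE zs orbT.
by rewrite inE => /predU1P [->|/zmax//]; apply: ltW.
Qed.

Section RootSystem.
Variables (R : realType) (n : nat) (Rt : seq 'rV[R]_n) (alpha : 'I_n -> 'rV[R]_n).
Hypotheses (HR : root_system Rt) (HS : simple_system Rt alpha).
Notation vec := 'rV[R]_n.
Notation wa := (wact alpha).
Implicit Types (x y g : vec) (s : seq 'I_n).

Lemma alpha_root i : alpha i \in Rt.
Proof. by case: HS. Qed.

Lemma root_neq0 x : x \in Rt -> x != 0.
Proof. by case: HR => Rt0 _ _ _ _; apply: contraTneq => ->. Qed.

Lemma alpha_neq0 i : alpha i != 0.
Proof. exact/root_neq0/alpha_root. Qed.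

Lemma wact_root s x : x \in Rt -> wa s x \in Rt.
Proof.
case: HR => _ _ Rt_refl _ _ xR; elim: s => //= i s IH.
exact: Rt_refl (alpha_root i) IH.
Qed.

Lemma wact_dot s x y : dot (wa s x) (wa s y) = dot x y.
Proof. by elim: s => //= i s <-; rewrite dot_refl ?alpha_neq0. Qed.

Lemma wactK s : cancel (wa s) (wa (rev s)).
Proof.
by elim: s => [|i s IH] x //=; rewrite rev_cons wact_rcons /= reflK ?alpha_neq0.
Qed.

Lemma wactVK s : cancel (wa (rev s)) (wa s).
Proof. by move=> x; rewrite -{1}(revK s) wactK. Qed.

Lemma wact_adj s x y : dot (wa s x) y = dot x (wa (rev s) y).
Proof. by rewrite -{1}(wactVK s y) wact_dot. Qed.

Lemma wact_refl s a x : wa s (refl a x) = refl (wa s a) (wa s x).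
Proof. by rewrite /refl linearB linearZ /= !wact_dot. Qed.

Definition simple_mx : 'M[R]_n := \matrix_i alpha i.

Lemma simple_mx_unit : simple_mx \in unitmx.
Proof. by case: HS => _ free _; rewrite -row_free_unit. Qed.

Definition scoord x i := (x *m invmx simple_mx) 0 i.

Lemma mul_simple_mx (c : 'rV[R]_n) : c *m simple_mx = \sum_i c 0 i *: alpha i.
Proof. by rewrite mulmx_sum_row; apply: eq_bigr => i _; rewrite rowK. Qed.

Lemma scoord_expand x : x = \sum_i scoord x i *: alpha i.
Proof. by rewrite -mul_simple_mx mulmxKV // simple_mx_unit. Qed.

Lemma scoord_sum (c : 'I_n -> R) i : scoord (\sum_j c j *: alpha j) i = c i.
Proof.
have -> : \sum_j c j *: alpha j = (\row_j c j) *m simple_mx.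
  by rewrite mul_simple_mx; apply: eq_bigr => j _; rewrite mxE.
by rewrite /scoord mulmxK ?simple_mx_unit // mxE.
Qed.

Lemma scoordB x y i : scoord (x - y) i = scoord x i - scoord y i.
Proof. by rewrite /scoord mulmxBl !mxE. Qed.

Lemma scoordZ c x i : scoord (c *: x) i = c * scoord x i.
Proof. by rewrite /scoord -scalemxAl mxE. Qed.

Lemma scoordN x i : scoord (- x) i = - scoord x i.
Proof. by rewrite -scaleN1r scoordZ mulN1r. Qed.

Lemma scoord_alpha k i : scoord (alpha k) i = (k == i)%:R.
Proof.
rewrite -[alpha k](_ : \sum_j (k == j)%:R *: alpha j = _) ?scoord_sum //.
rewrite (bigD1 k) //= eqxx scale1r big1 ?addr0 // => j /negbTE.
by rewrite eq_sym => ->; rewrite scale0r.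
Qed.

Lemma dot_scoord z x : dot z x = \sum_i scoord x i * dot z (alpha i).
Proof.
by rewrite {1}(scoord_expand x) dot_sumr; apply: eq_bigr => i _; rewrite dotZr.
Qed.

Definition pos_cone x := [forall i, 0 <= scoord x i].

Lemma pos_cone_alpha k : pos_cone (alpha k).
Proof. by apply/forallP => i; rewrite scoord_alpha ler0n. Qed.

Lemma root_sign x : x \in Rt -> pos_cone x \/ pos_cone (- x).
Proof.
case: HS => _ _ /[apply] -[c [-> [c_ge0 | c_le0]]]; [left | right]; apply/forallP => i.
  by rewrite scoord_sum.
by rewrite scoordN scoord_sum oppr_ge0.
Qed.

Lemma scoord_refl k x i : i != k -> scoord (refl (alpha k) x) i = scoord x i.
Proof.
by move=> ik; rewrite /refl scoordB scoordZ scoord_alpha eq_sym (negbTE ik) mulr0 subr0.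
Qed.

Lemma refl_pos_root i x : x \in Rt -> pos_cone x ->
  ~~ pos_cone (refl (alpha i) x) -> x = alpha i.
Proof.
move=> xR /forallP x_ge0 rx_pos.
have rxR : refl (alpha i) x \in Rt.
  by case: HR => _ _ Rt_refl _ _; apply/Rt_refl/xR/alpha_root.
have scoord_eq0 j : j != i -> scoord x j = 0.
  move=> ji; apply/eqP; rewrite eq_le x_ge0 andbT.
  case: (root_sign rxR) => [/(negP rx_pos) //| /forallP/(_ j)].
  by rewrite scoordN scoord_refl // oppr_ge0.
have ex : x = scoord x i *: alpha i.
  rewrite {1}(scoord_expand x) (bigD1 i) //= big1 ?addr0 // => j /scoord_eq0 ->.
  by rewrite scale0r.
case: HR => _ _ _ _ /(_ (alpha i) (scoord x i) (alpha_root i)); rewrite -ex => /(_ xR).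
by case=> e; rewrite ex e ?scale1r //; move: (x_ge0 i); rewrite e ler0N1.
Qed.

Lemma scoord_wact_out (K : {set 'I_n}) s x j :
  all (fun i => i \in K) s -> j \notin K -> scoord (wa s x) j = scoord x j.
Proof.
elim: s => //= i s IH /andP [iK sK] jK.
by rewrite scoord_refl ?IH //; apply: contraNneq jK => ->.
Qed.

Lemma dot_pos_cone_ge0 z g : pos_cone g ->
  (forall i, scoord g i != 0 -> 0 <= dot z (alpha i)) -> 0 <= dot z g.
Proof.
move=> /forallP g_ge0 zg; rewrite dot_scoord; apply: sumr_ge0 => i _.
by have [->|/zg] := eqVneq (scoord g i) 0; [rewrite mul0r | exact: mulr_ge0].
Qed.

Lemma dot_pos_cone_gt0 z g : pos_cone g -> g != 0 ->
  (forall i, scoord g i != 0 -> 0 < dot z (alpha i)) -> 0 < dot z g.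
Proof.
move=> /forallP g_ge0 g0 zg.
have [j gj] : exists j, scoord g j != 0.
  apply/existsP; apply: contraNT g0 => /existsPn g_eq0.
  apply/eqP; rewrite [g]scoord_expand big1 // => i _.
  by rewrite (eqP (negPn (g_eq0 i))) scale0r.
rewrite dot_scoord (bigD1 j) //= ltr_pwDl //.
  by rewrite mulr_gt0 ?zg // lt_def gj g_ge0.
apply: sumr_ge0 => i _.
by have [->|/zg/ltW] := eqVneq (scoord g i) 0; [rewrite mul0r | exact: mulr_ge0].
Qed.

Lemma vertex_wact Q s v : (forall x, Q x -> Q (wa s x)) ->
  (forall x, Q x -> Q (wa (rev s) x)) -> vertex Q v -> vertex Q (wa s v).
Proof.
move=> Qs Qs' [Qv vQ]; split=> [|x y t Qx Qy t0 t1 e]; first exact: Qs.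
have e' : v = t *: wa (rev s) x + (1 - t) *: wa (rev s) y.
  by rewrite -[v](wactK s) e linearD !linearZ.
have [xv yv] := vQ _ _ t (Qs' _ Qx) (Qs' _ Qy) t0 t1 e'.
by split; [rewrite -xv | rewrite -yv]; rewrite wactVK.
Qed.

Lemma orbit_finite x : exists L : seq vec, forall s, wa s x \in L.
Proof.
case: HR => _ Rt_full _ _ _; set m := size Rt.
have /submxP [D eD] : (x <= \matrix_(i < m) nth 0 Rt i)%MS by apply: submx_full.
have ex : x = \sum_(i < m) D 0 i *: nth 0 Rt i.
  by rewrite eD mulmx_sum_row; apply: eq_bigr => i _; rewrite rowK.
have Rt_idx s (i : 'I_m) : (index (wa s (nth 0%R Rt i)) Rt < m)%N.
  by rewrite /m index_mem wact_root // mem_nth.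
exists [seq \sum_(i < m) D 0 i *: nth 0 Rt (g i) | g : {ffun 'I_m -> 'I_m}] => s.
apply/mapP; exists [ffun i => Ordinal (Rt_idx s i)]; first by rewrite mem_enum.
rewrite {1}ex linear_sum; apply: eq_bigr => i _.
by rewrite linearZ ffunE /= nth_index ?wact_root ?mem_nth.
Qed.

Lemma Worbit_wact Lam s y : Worbit alpha Lam y -> Worbit alpha Lam (wa s y).
Proof. by move=> [s' [l [lL ->]]]; exists (s ++ s'), l; rewrite wact_cat. Qed.

Lemma orbit_list Lam : exists T : seq vec, forall y, Worbit alpha Lam y <-> y \in T.
Proof.
have [U LamU] : exists U : seq vec, forall s l, l \in Lam -> wa s l \in U.
  elim: Lam => [|l Lam [U LamU]]; first by exists [::].
  have [L lL] := orbit_finite l; exists (L ++ U) => s l'.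
  by rewrite inE mem_cat => /predU1P [->|/LamU ->]; rewrite ?lL ?orbT.
exists [seq y <- U | `[< Worbit alpha Lam y >]] => y; rewrite mem_filter.
split=> [/[dup] /asboolP -> [s [l [lL ->]]]|/andP [/asboolP //]].
exact: LamU.
Qed.

Lemma rho_exists : exists rho, forall i, dot rho (alpha i) = 1.
Proof.
have tr_unit : simple_mx^T \in unitmx by rewrite unitmx_tr simple_mx_unit.
exists (const_mx 1 *m invmx simple_mx^T) => i.
have := congr1 (fun M : 'rV[R]_n => M 0 i) (mulmxKV tr_unit (const_mx 1)).
rewrite [in RHS]mxE => /(eq_trans _); apply; rewrite dotE mxE.
by apply: eq_bigr => j _; rewrite !mxE.
Qed.

Implicit Types (u w : seq 'I_n).

Lemma deletion_condition u k : ~~ pos_cone (wa u (alpha k)) ->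
  exists u', [/\ (size u' < size u)%N, {subset u' <= u} &
                 forall x, wa u (refl (alpha k) x) = wa u' x].
Proof.
elim: u => [|i u IH] /=; first by rewrite pos_cone_alpha.
have [upos neg|/IH [u' [ltu' subu' eu']] _] := boolP (pos_cone (wa u (alpha k))).
  have ui : wa u (alpha k) = alpha i.
    by apply: refl_pos_root => //; apply/wact_root/alpha_root.
  exists u; split => // [j ju|x]; first by rewrite inE ju orbT.
  by rewrite wact_refl ui reflK ?alpha_neq0.
exists (i :: u'); split => // [j|x] /=; last by rewrite eu'.
by rewrite !inE => /predU1P [->|/subu' ->]; rewrite ?eqxx ?orbT.
Qed.

Section Coxeter.
Variable K : {set 'I_n}.

Definition Kword w := all (fun i => i \in K) w.

Definition strict_inC x := forall k, k \in K -> 0 < dot x (alpha k).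

Lemma Kword_rev w : Kword (rev w) = Kword w.
Proof. exact: all_rev. Qed.

Lemma Kword_descent k w : Kword w ->
  pos_cone (wa (rev w) (alpha k)) \/
  exists2 w', Kword w' /\ (size w' < size w)%N & wa (k :: w) =1 wa w'.
Proof.
move=> wK; have [|/deletion_condition [u [ltu subu eu]]] := boolP (pos_cone _); first by left.
right; exists (rev u).
  split; last by rewrite size_rev -(size_rev w).
  by rewrite Kword_rev; apply/allP => i /subu; rewrite mem_rev; apply: (allP wK).
move=> x; rewrite -{1}(wactVK u x) -eu /= wactVK //.
by rewrite reflK // alpha_neq0.
Qed.

Lemma Kroot_support w k i : Kword w -> k \in K ->
  scoord (wa w (alpha k)) i != 0 -> i \in K.
Proof.
move=> wK kK; apply: contraTT => iK.
have ki : k != i by apply: contraNneq iK => <-.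
by rewrite (scoord_wact_out _ wK iK) scoord_alpha (negbTE ki) eqxx.
Qed.

Lemma Kword_stabilizer b w : inC alpha K b -> Kword w -> wa w b = b ->
  exists2 w', all (fun i => i \in [set k in K | refl (alpha k) b == b]) w' &
              wa w =1 wa w'.
Proof.
move=> b_dom; have [m] := ubnP (size w); elim: m w => // m IH [_ _ _|k w];
  first by exists [::].
rewrite ltnS => ltwm /andP [kK wK] fixb.
case: (Kword_descent k wK) => [gpos | [w' [w'K ltw'] ew']]; last first.
  have [|w'' w''K ew''] := IH w' (ltn_trans ltw' ltwm) w'K; first by rewrite -ew'.
  by exists w'' => // x; rewrite ew'.
set g := wa (rev w) (alpha k).
have ak0 := alpha_neq0 k.
have bg : 0 <= dot b g.
  apply: dot_pos_cone_ge0 gpos _ => i /Kroot_support; rewrite Kword_rev.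
  by move=> /(_ wK kK); apply: b_dom.
have bk : dot b (alpha k) = - dot b g.
  rewrite -{1}fixb wact_adj rev_cons wact_rcons refl_self //.
  by rewrite linearN dotNr.
have rkb : refl (alpha k) b = b.
  apply/eqP; rewrite refl_fix //; apply/eqP/le_anti.
  by rewrite b_dom // andbT bk oppr_le0.
have [|w' w'K ew'] := IH w ltwm wK.
  by rewrite -[LHS](reflK ak0) [refl _ (wa _ _)]fixb rkb.
exists (k :: w'); first by rewrite /= inE kK rkb eqxx.
by move=> x /=; rewrite ew'.
Qed.

Lemma Kword_gap a z w : inC alpha K a -> strict_inC z -> Kword w ->
  0 <= dot a (z - wa w z) /\ (dot a (z - wa w z) = 0 -> wa w a = a).
Proof.
move=> a_dom z_dom; have [m] := ubnP (size w); elim: m w => // m IH [_ _|k w].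
  by rewrite subrr dot0r.
rewrite ltnS => ltwm /andP [kK wK].
case: (Kword_descent k wK) => [gpos | [w' [w'K ltw'] ew']]; last first.
  by rewrite !ew'; apply: IH (ltn_trans ltw' ltwm) w'K.
set g := wa (rev w) (alpha k).
have ak0 := alpha_neq0 k.
have zg : 0 < dot z g.
  apply: dot_pos_cone_gt0 gpos _ _.
    exact/root_neq0/wact_root/alpha_root.
  move=> i /Kroot_support; rewrite Kword_rev.
  by move=> /(_ wK kK); apply: z_dom.
set c := 2 * dot (wa w z) (alpha k) / dot (alpha k) (alpha k).
have c_gt0 : 0 < c.
  by rewrite divr_gt0 ?dot_gt0 // mulr_gt0 // wact_adj.
have -> : z - wa (k :: w) z = (z - wa w z) + c *: alpha k.
  by rewrite /= /refl -/c opprD opprK addrA.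
have [gap_ge0 gap0] := IH w ltwm wK.
have cak_ge0 : 0 <= c * dot a (alpha k) by rewrite mulr_ge0 ?a_dom // ltW.
rewrite dotDr dotZr; split=> [|/eqP]; first exact: addr_ge0.
rewrite paddr_eq0 // mulf_eq0 (gt_eqF c_gt0) /=.
move=> /andP [/eqP/gap0 /= -> /eqP ak0']; apply/eqP.
by rewrite refl_fix // ak0'.
Qed.

(* A W_K-conjugate maximising [dot rho], where [dot rho (alpha i) = 1] for all i,
   is K-dominant: otherwise some r_k would increase [dot rho]. *)
Lemma dominant_conjugate v : exists2 t, Kword t & inC alpha K (wa t v).
Proof.
have [rho rho1] := rho_exists; have [L vL] := orbit_finite v.
set C := [seq y <- L | `[< exists2 t, Kword t & y = wa t v >]].
have vC : v \in C by rewrite mem_filter (vL [::]) andbT; apply/asboolP; exists [::].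
have [_ /[!mem_filter] /andP [/asboolP [t tK ->] _] zmax] :=
  exists_seq_max (dot rho) vC.
exists t => // k kK; rewrite leNgt; apply/negP => z_neg.
have /zmax : refl (alpha k) (wa t v) \in C.
  rewrite mem_filter (vL (k :: t)) andbT; apply/asboolP.
  by exists (k :: t); rewrite /= ?kK.
have c_lt0 : 2 * dot (wa t v) (alpha k) / dot (alpha k) (alpha k) < 0.
  by rewrite pmulr_llt0 ?invr_gt0 ?dot_gt0 ?alpha_neq0 // pmulr_rlt0.
by rewrite /refl dotBr dotZr rho1 mulr1; lra.
Qed.

End Coxeter.

Section Facet.
Variables (Lam T vs : seq vec) (K : {set 'I_n}) (F : vec -> Prop) (a b : vec) (be : R).
Hypotheses (orbitT : forall y, Worbit alpha Lam y <-> y \in T)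
  (P_full : full_dim (hull T)) (a_neq0 : a != 0)
  (a_le : forall x, hull T x -> dot a x <= be)
  (eF : forall x, F x <-> hull T x /\ dot a x = be) (F_ne : exists x, F x)
  (F_facet : forall (c : vec) (d : R), (forall x, F x -> dot c x = d) ->
     exists t : R, c = t *: a /\ d = t * be)
  (vs_uniq : uniq vs) (vs_vertex : forall v, v \in vs <-> vertex F v)
  (b_bary : b = (size vs)%:R^-1 *: \sum_(v <- vs) v)
  (b_dom : inC alpha K b).
Notation P := (hull T).

Lemma hull_wact s x : P x -> P (wa s x).
Proof. by apply: wcomb_linear => y /orbitT /(Worbit_wact s) /orbitT. Qed.

Lemma F_hull x : F x -> P x.
Proof. by case/eF. Qed.

Lemma F_vertices x : F x -> wcomb (vertex F) 1 x.
Proof. exact: face_vertices a_le eF. Qed.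

Lemma size_vs_gt0 : (0 < size vs)%N.
Proof.
have [x /F_vertices/wcomb_exists [//|v /vs_vertex]] := F_ne.
by case: vs.
Qed.

Let N_gt0 : 0 < (size vs)%:R :> R. Proof. by rewrite ltr0n size_vs_gt0. Qed.

Lemma bary_in_F : F b.
Proof.
have vs_F y : y \in vs -> F y by move/vs_vertex => [].
apply/eF; split.
  rewrite b_bary; apply: hull_convex N_gt0.
  by apply: wcomb_sub (wcomb_seq vs) => y /vs_F /F_hull.
rewrite b_bary dotZr (wcomb_dot_const (be := be) _ (wcomb_seq vs)).
  by rewrite mulrA mulVf ?mul1r ?gt_eqF.
by move=> y /vs_F /eF [].
Qed.

Lemma bary_rigid g ga : (forall x, P x -> dot g x <= ga) -> dot g b = ga ->
  forall x, F x -> dot g x = ga.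
Proof.
move=> g_le gb.
have g_vs v : v \in vs -> dot g v <= ga by move=> /vs_vertex [/F_hull/g_le].
have sum0 : \sum_(v <- vs) (ga - dot g v) = 0.
  have sum_g : dot g (\sum_(v <- vs) v) = (size vs)%:R * ga.
    by rewrite -gb b_bary dotZr mulrA mulfV ?mul1r // lt0r_neq0.
  rewrite sumrB big_const_seq count_predT iter_addr addr0 -dot_sumr sum_g.
  by rewrite mulr_natl subrr.
have g_eq v : vertex F v -> dot g v = ga.
  move=> /vs_vertex vvs; move/eqP: sum0; rewrite big_seq psumr_eq0 => [|u /g_vs].
    by move=> /allP /(_ v vvs); rewrite vvs subr_eq0 => /eqP.
  by rewrite subr_ge0.
by move=> x /F_vertices /(wcomb_dot_const g_eq); rewrite mul1r.
Qed.

Lemma img_facet s y : img (wa s) F y <-> P y /\ dot (wa s a) y = be.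
Proof.
split=> [[x [/eF [Px ax] <-]]|[Py ay]].
  by split; [exact: hull_wact | rewrite wact_dot].
exists (wa (rev s) y); rewrite wactVK; split => //; apply/eF.
by split; [exact: hull_wact | rewrite -ay -(wact_dot s) wactVK].
Qed.

Lemma wact_normal_le s y : P y -> dot (wa s a) y <= be.
Proof. by move=> Py; rewrite wact_adj; apply/a_le/hull_wact. Qed.

Lemma facet_normal_eq g : dot g g = dot a a -> (forall x, P x -> dot g x <= be) ->
  dot g b = be -> g = a.
Proof.
move=> gg g_le gb; have [t [gt bet]] := F_facet (bary_rigid g_le gb).
have aa_neq0 : dot a a != 0 by rewrite gt_eqF ?dot_gt0.
have t2 : t * t = 1.
  by apply: (mulIf aa_neq0); rewrite mul1r -{2}gg gt dotZl dotZr mulrA.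
have /orP [/eqP t1|/eqP t_N1] : (t == 1) || (t == -1) by rewrite -sqrf_eq1 expr2 t2.
  by rewrite gt t1 scale1r.
have be0 : be = 0 by move: bet; rewrite t_N1; lra.
case/eqP: a_neq0; apply: (P_full (d := 0)) => x Px; apply/le_anti.
have := g_le x Px; have := a_le Px; rewrite gt t_N1 dotZl be0.
by move=> ax Nax; apply/andP; split; lra.
Qed.

Lemma normal_fixed_stabilizes s : wa s a = a -> stabilizes (wa s) F.
Proof. by move=> sa y; rewrite img_facet sa; split => /eF. Qed.

Lemma bary_fixed_normal_fixed s : wa s b = b -> wa s a = a.
Proof.
move=> sb; apply: facet_normal_eq (wact_dot s a a) (wact_normal_le s) _.
by rewrite -{1}sb wact_dot; case/eF: bary_in_F.
Qed.

Lemma stabilizes_bary_fixed s : stabilizes (wa s) F -> wa s b = b.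
Proof.
move=> stab.
have F_s x : F x -> F (wa s x) by move=> Fx; apply/stab; exists x.
have F_rev x : F x -> F (wa (rev s) x) by move=> /stab [y [Fy <-]]; rewrite wactK.
have sub : {subset map (wa s) vs <= vs}.
  by move=> _ /mapP [v /vs_vertex vF ->]; apply/vs_vertex/(vertex_wact F_s F_rev).
have uniq_s : uniq (map (wa s) vs).
  by rewrite map_inj_uniq // => x y /(can_inj (wactK s)).
have [_ /(uniq_perm uniq_s vs_uniq) perm] :=
  uniq_min_size uniq_s sub (eq_leq (esym (size_map _ _))).
rewrite b_bary linearZ linear_sum /=; congr (_ *: _).
by apply/esym; rewrite -(perm_big _ perm) big_map.
Qed.

Lemma facet_stabilizer f :
  (inWK alpha K f /\ stabilizes f F) <->
  inWK alpha [set k in K | refl (alpha k) b == b] f.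
Proof.
split=> [[[s [sK /funext ->]] /stabilizes_bary_fixed sb] | [s [sKb /funext ->]]].
  by have [s' s'Kb es'] := Kword_stabilizer b_dom sK sb; exists s'.
have sK : Kword K s by apply/allP => i /(allP sKb); rewrite inE => /andP [].
have sb : wa s b = b.
  by elim: s sKb {sK} => //= i s IH /andP [/[!inE] /andP [_ /eqP ib] /IH ->].
split; first by exists s.
exact/normal_fixed_stabilizes/bary_fixed_normal_fixed.
Qed.

Lemma normal_dominant : inC alpha K a.
Proof.
move=> k kK; rewrite leNgt; apply/negP => ak_lt0.
have ak0 := alpha_neq0 k.
case/eF: bary_in_F => Pb ab.
have c_lt0 : 2 * dot a (alpha k) / dot (alpha k) (alpha k) < 0.
  by rewrite pmulr_llt0 ?invr_gt0 ?dot_gt0 // pmulr_rlt0.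
have kb : 0 <= dot (alpha k) b by rewrite dotC b_dom.
have rb : dot (wact alpha [:: k] a) b = be.
  apply/le_anti; rewrite wact_normal_le //= /refl dotBl dotZl ab; nra.
have /eqP := facet_normal_eq (wact_dot [:: k] a a) (wact_normal_le [:: k]) rb.
by rewrite refl_fix // => /eqP ak_eq0; rewrite ak_eq0 ltxx in ak_lt0.
Qed.

Lemma common_vertex s x : F x -> img (wa s) F x -> exists v,
  [/\ v \in T, vertex P v, dot a v = be & dot (wa s a) v = be].
Proof.
move=> /eF [Px ax] /img_facet [_ sax].
have g_le y : y \in T /\ vertex P y -> dot (a + wa s a) y <= be + be.
  by move=> [_ [Py _]]; rewrite dotDl lerD ?a_le ?wact_normal_le.
have := wcomb_dot_eq g_le (krein_milman Px); rewrite mul1r dotDl ax sax.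
move=> /(_ erefl) /wcomb_exists [//|v [[vT vP] sum_v]].
have av := a_le (proj1 vP); have sav := wact_normal_le s (proj1 vP).
by rewrite dotDl in sum_v; exists v; split => //; lra.
Qed.

Lemma vertex_regular : Wnondegenerate alpha P ->
  (forall l, l \in Lam -> inC alpha setT l) ->
  forall v, v \in T -> vertex P v -> forall k, dot v (alpha k) != 0.
Proof.
move=> nondeg Lam_dom _ /orbitT [q [l [lL ->]]] qlP k.
have lP : vertex P l.
  by have := vertex_wact (hull_wact (rev q)) (hull_wact _) qlP; rewrite wactK.
have l_pos i : 0 < dot l (alpha i).
  rewrite lt_def Lam_dom ?inE // andbT; apply/eqP => li.
  by apply: (nondeg l lP); split; [exact: Lam_dom | exists i].
have l_gt0 g : pos_cone g -> g != 0 -> 0 < dot l g.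
  by move=> gpos g0; apply: dot_pos_cone_gt0 gpos g0 _ => i _; apply: l_pos.
rewrite wact_adj; set g := wa (rev q) (alpha k).
have gR : g \in Rt by apply/wact_root/alpha_root.
have g0 := root_neq0 gR.
case: (root_sign gR) => [/l_gt0 /(_ g0) /gt_eqF -> //|/l_gt0].
by rewrite oppr_eq0 dotNr oppr_gt0 => /(_ g0) /lt_eqF ->.
Qed.

Lemma meet_fixes_normal s x : Wnondegenerate alpha P ->
  (forall l, l \in Lam -> inC alpha setT l) ->
  Kword K s -> F x -> img (wa s) F x -> wa s a = a.
Proof.
move=> nondeg Lam_dom sK Fx sFx.
have [v [vT vP av sav]] := common_vertex Fx sFx.
have [t tK z_dom] := dominant_conjugate K v; set z := wa t v in z_dom.
have z_reg : strict_inC K z.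
  move=> k kK; rewrite lt_def z_dom // andbT.
  apply: (vertex_regular nondeg Lam_dom); first exact/orbitT/Worbit_wact/orbitT.
  exact: vertex_wact (hull_wact t) (hull_wact _) vP.
have fix_a u : Kword K u -> dot a (wa u z) = be -> wa u a = a.
  move=> uK uz; have [gap_ge0 gap0] := Kword_gap normal_dominant z_reg uK.
  apply: gap0; apply/le_anti; rewrite gap_ge0 andbT dotBr uz subr_le0.
  exact/a_le/hull_wact/(proj1 vP).
have tz : wa (rev t) z = v := wactK t v.
have ta : wa (rev t) a = a by apply: fix_a; rewrite ?Kword_rev ?tz.
have : wa (rev s ++ rev t) a = a.
  apply: fix_a; first by rewrite /Kword all_cat !all_rev; apply/andP.
  by rewrite wact_cat tz -wact_adj.
by rewrite wact_cat ta => sa; rewrite -{1}sa wactVK.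
Qed.

Lemma facet_meet_image : Wnondegenerate alpha P ->
  (forall l, l \in Lam -> inC alpha setT l) ->
  forall f, inWK alpha K f ->
  (forall y, (F y /\ img f F y) <-> F y) \/ (forall y, ~ (F y /\ img f F y)).
Proof.
move=> nondeg Lam_dom f [s [sK /funext ->]].
have [[x [Fx sFx]]|disj] := pselect (exists x, F x /\ img (wa s) F x); last first.
  by right=> y Fy; apply: disj; exists y.
have stab := normal_fixed_stabilizes (meet_fixes_normal nondeg Lam_dom sK Fx sFx).
by left=> y; split=> [[]//|Fy]; split; last exact/stab.
Qed.

End Facet.

End RootSystem.

Theorem lemma2p5 (R : realType) (n : nat) (Rt : seq 'rV[R]_n)
    (alpha : 'I_n -> 'rV[R]_n) (Lam : seq 'rV[R]_n) (K : {set 'I_n})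
    (F : 'rV[R]_n -> Prop) (b : 'rV[R]_n) :
  root_system Rt -> simple_system Rt alpha ->
  (forall l, l \in Lam -> inC alpha setT l) ->
  full_dim (Wpolytope alpha Lam) ->
  facet (Wpolytope alpha Lam) F ->
  is_bary F b -> inC alpha K b ->
  (forall w : 'rV[R]_n -> 'rV[R]_n,
      (inWK alpha K w /\ stabilizes w F) <->
      inWK alpha [set k in K | refl (alpha k) b == b] w)
  /\
  (Wnondegenerate alpha (Wpolytope alpha Lam) ->
   forall s : 'rV[R]_n -> 'rV[R]_n, inWK alpha K s ->
     (forall y, (F y /\ img s F y) <-> F y) \/
     (forall y, ~ (F y /\ img s F y))).
Proof.
move=> HR HS Lam_dom P_full [a [be [a_neq0 a_le eF F_ne F_facet]]].
move=> [vs [vs_uniq vs_vertex b_bary]] b_dom.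
have [T orbitT] := orbit_list HR HS Lam.
have P_hull : Wpolytope alpha Lam = hull T := conv_hull orbitT.
rewrite P_hull in P_full a_le eF *; split.
  exact: (facet_stabilizer HR HS orbitT P_full a_neq0 a_le eF F_ne F_facet
            vs_uniq vs_vertex b_bary b_dom).
move=> nondeg; exact: (facet_meet_image HR HS orbitT P_full a_neq0 a_le eF F_ne
                         F_facet vs_vertex b_bary b_dom nondeg Lam_dom).
Qed.
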